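(* Let $n=4$ and let $PV_1,\dots,PV_4$ be independent random variables with distributions $P_1=0.05\,\delta_{0.05}+0.95\,\delta_{1}$, $P_2=0.025\,\delta_{0.10}+0.975\,\delta_{1}$, $P_3=0.025\,\delta_{0.15}+0.975\,\delta_{1}$, $P_4=\delta_1$, where all four null hypotheses are true and each $F_i$ is the distribution function of $P_i$. Let $G=F_1+F_2+F_3+F_4$. Consider the DBH procedure at level $\alpha=0.05$: with ordered observed $p$-values $pv_{(1)}\le\cdots\le pv_{(4)}$, define adjusted $p$-values $\widetilde{pv}_{(4)}=pv_{(4)}$ and $\widetilde{pv}_{(i)}=\min\{\widetilde{pv}_{(i+1)},G(pv_{(i)})/i\}$ for $i=3,2,1$, and reject exactly those hypotheses whose adjusted $p$-value is $\le 0.05$. Then the probability of at least one rejection (which equals the FDR, since all nulls are true) is exactly $0.05059375>0.05$. In particular, the DBH procedure does not control the FDR at level $\alpha$ in general, even under independence.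
   Context: $\delta_x$ denotes the Dirac (point mass) measure at $x$. The FDR is $E[V/\max(R,1)]$ where $R$ is the number of rejections and $V$ the number of rejected true null hypotheses; when all nulls are true it equals $P(R\ge1)$. *)

From HB Require Import structures.
From mathcomp Require Import all_boot all_order all_algebra.
Set Implicit Arguments. Unset Strict Implicit. Unset Printing Implicit Defensive.
Import Order.TTheory GRing.Theory Num.Theory.
Local Open Scope ring_scope.

(* A finitely supported distribution on Q: a list of (atom, mass) pairs,
   i.e. sum_k mass_k * delta_{atom_k}. *)
Definition dist := seq (rat * rat).

Definition cdf (P : dist) (t : rat) : rat := \sum_(a <- P | a.1 <= t) a.2.

(* Joint law of independent random variables with laws Ps (product measure):
   list of (outcome vector, probability). *)
Fixpoint joint (Ps : seq dist) : seq (seq rat * rat) :=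
  match Ps with
  | [::] => [:: ([::], 1)]
  | P :: Ps' => [seq (a.1 :: v.1, a.2 * v.2) | a <- P, v <- joint Ps']
  end.

Definition expect (Ps : seq dist) (f : seq rat -> rat) : rat :=
  \sum_(o <- joint Ps) o.2 * f o.1.

Definition prob (Ps : seq dist) (E : seq rat -> bool) : rat :=
  \sum_(o <- joint Ps | E o.1) o.2.

(* DBH adjusted p-values on the sorted list s = [pv_(1); ...; pv_(n)]
   (1-based ranks, pv_(i) = nth 0 s i.-1).
   tilde G s m = adjusted p-value of rank n - m, computed by
   tilde_(n) = pv_(n),  tilde_(i) = min(tilde_(i+1), G(pv_(i))/i). *)
Fixpoint tilde (G : rat -> rat) (s : seq rat) (m : nat) : rat :=
  match m with
  | 0%N => nth 0 s (size s).-1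
  | m'.+1 =>
      let i := (size s - m'.+1)%N in
      Num.min (tilde G s m') (G (nth 0 s i.-1) / i%:R)
  end.

Definition adjusted (G : rat -> rat) (s : seq rat) (i : nat) : rat :=
  tilde G s (size s - i)%N.

Definition DBH_R (G : rat -> rat) (alpha : rat) (pv : seq rat) : nat :=
  let s := sort <=%R pv in
  count (fun i => adjusted G s i <= alpha) (iota 1 (size s)).

Definition Gsum (Ps : seq dist) (t : rat) : rat := \sum_(P <- Ps) cdf P t.

(* FDR when all null hypotheses are true: V = R, FDR = E[V / max(R,1)]. *)
Definition FDR_all_null (Ps : seq dist) (R : seq rat -> nat) : rat :=
  expect Ps (fun pv => (R pv)%:R / (maxn (R pv) 1)%:R).

Definition P1 : dist := [:: (1/20, 1/20); (1, 19/20)].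
Definition P2 : dist := [:: (1/10, 1/40); (1, 39/40)].
Definition P3 : dist := [:: (3/20, 1/40); (1, 39/40)].
Definition P4 : dist := [:: (1, 1)].
Definition Ps_ex : seq dist := [:: P1; P2; P3; P4].

(** All nulls are true, so the FDR is the probability of at least one
    rejection. On the atoms [0.05], [0.10], [0.15] the function [G] takes the
    values [0.05], [0.075], [0.1]. Hence DBH rejects iff [PV_1 = 0.05] (then
    [G(pv_(1))/1 = 0.05]) or [PV_2 = 0.10] and [PV_3 = 0.15] (then
    [G(pv_(2))/2 = 0.05]); [PV_2 = 0.10] alone gives [G(pv_(1)) = 0.075].
    This event has probability [1/20 + 19/20 * (1/40)^2 = 0.05059375]. *)
From HB Require Import structures.
From mathcomp Require Import all_boot all_order all_algebra.
From mathcomp Require Import lra.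
Import Order.TTheory GRing.Theory Num.Theory.
Local Open Scope ring_scope.

Lemma FDR_all_null_prob (Ps : seq dist) (R : seq rat -> nat) :
  FDR_all_null Ps R = prob Ps (fun pv => (1 <= R pv)%N).
Proof.
rewrite /FDR_all_null /expect /prob [RHS]big_mkcond /=.
apply: eq_bigr => o _; case: (R o.1) => [|n] /=; first by rewrite mul0r mulr0.
by rewrite (maxn_idPl (ltn0Sn n)) divff ?mulr1 // pnatr_eq0.
Qed.

Lemma eq_prob {Ps : seq dist} {E1 E2 : seq rat -> bool} :
  {in joint Ps, forall o, E1 o.1 = E2 o.1} -> prob Ps E1 = prob Ps E2.
Proof.
move=> eqE; rewrite /prob big_seq_cond [RHS]big_seq_cond.
by apply: eq_bigl => o; case: (boolP (o \in joint Ps)) => // /eqE ->.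
Qed.

Lemma tilde_ext {G1 G2 : rat -> rat} :
  G1 =1 G2 -> forall s m, tilde G1 s m = tilde G2 s m.
Proof. by move=> eqG s; elim=> //= m ->; rewrite eqG. Qed.

Lemma DBH_R_ext {G1 G2 : rat -> rat} (alpha : rat) :
  G1 =1 G2 -> DBH_R G1 alpha =1 DBH_R G2 alpha.
Proof.
move=> eqG pv; rewrite /DBH_R /adjusted.
by apply: eq_count => i; rewrite (tilde_ext eqG).
Qed.

Definition G_ex (t : rat) : rat :=
  (if 1/20 <= t then 1/20 else 0) + (if 1/10 <= t then 1/40 else 0)
  + (if 3/20 <= t then 1/40 else 0) + (if 1 <= t then 39/10 else 0).

Lemma Gsum_exE : Gsum Ps_ex =1 G_ex.
Proof.
move=> t; rewrite /Gsum /cdf /G_ex !big_cons !big_nil /= !addr0.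
by case: (1/20 <= t); case: (1/10 <= t); case: (3/20 <= t); case: (1 <= t); lra.
Qed.

Definition DBH_rejects_ex (pv : seq rat) : bool :=
  (pv`_0 == 1/20) || (pv`_1 == 1/10) && (pv`_2 == 3/20).

Lemma DBH_rejects_exE :
  {in joint Ps_ex, forall o,
    (1 <= DBH_R (Gsum Ps_ex) (1/20) o.1)%N = DBH_rejects_ex o.1}.
Proof.
have /allP rejects : all [pred o : seq rat * rat |
    (1 <= DBH_R G_ex (1/20) o.1)%N == DBH_rejects_ex o.1] (joint Ps_ex).
  by vm_compute.
by move=> o /rejects /eqP <-; rewrite (DBH_R_ext _ Gsum_exE).
Qed.

Lemma prob_DBH_rejects_ex :
  prob Ps_ex DBH_rejects_ex = 1/20 + 19/20 * (1/40 * 1/40).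
Proof.
have masses : [seq o.2 | o <- joint Ps_ex & DBH_rejects_ex o.1] =
  [:: 1/20 * (1/40 * (1/40 * (1 * 1))); 1/20 * (1/40 * (39/40 * (1 * 1)));
      1/20 * (39/40 * (1/40 * (1 * 1))); 1/20 * (39/40 * (39/40 * (1 * 1)));
      19/20 * (1/40 * (1/40 * (1 * 1)))].
  by apply/eqP; vm_compute.
rewrite /prob -big_filter -(big_map snd xpredT id) masses !big_cons big_nil /=.
lra.
Qed.

Theorem mainTheorem3 :
  let R := DBH_R (Gsum Ps_ex) (1/20) in
  prob Ps_ex (fun pv => (1 <= R pv)%N) = 1619 / (32 * 1000) /\
  FDR_all_null Ps_ex R = 1619 / (32 * 1000) /\
  1/20 < FDR_all_null Ps_ex R.
Proof.
move=> R.
have probR : prob Ps_ex (fun pv => (1 <= R pv)%N) = 1619 / (32 * 1000).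
  by rewrite (eq_prob DBH_rejects_exE) prob_DBH_rejects_ex; lra.
have FDR_R : FDR_all_null Ps_ex R = 1619 / (32 * 1000).
  by rewrite FDR_all_null_prob.
split; [exact: probR | split; [exact: FDR_R | rewrite FDR_R; lra]].
Qed.
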